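(* If $T$ is convex, then an allocation $\mathbf X\in\mathcal A(\mathtt w)$ is Pareto optimal if and only if it is a full-insurance allocation, i.e., each $X_i$ is almost surely constant.
   Context: $(\Omega,\mathcal F,\mathbb P)$ is a nonatomic probability space, $\mathcal X\subset L^\infty(\Omega,\mathcal F,\mathbb P)$ a given collection of random variables, $n\ge2$ agents, aggregate endowment a constant $\mathtt w\in\mathbb R$, and $\mathcal A(\mathtt w):=\{(X_1,\ldots,X_n)\in\mathcal X^n:\sum_iX_i=\mathtt w\}$. Agent 1: $U_1(X)=\int u_1(X)\,d(T\circ\mathbb P)$ (Choquet integral); agents $i\ge2$: $U_i(X)=\int u_i(X)\,d\mathbb P$. Standing assumption: $T:[0,1]\to[0,1]$ twice differentiable, strictly increasing, $T(0)=0$, $T(1)=1$; each $u_i$ twice differentiable, strictly concave, increasing. $\mathbf X\in\mathcal A(\mathtt w)$ is Pareto optimal if there is no $\mathbf X'\in\mathcal A(\mathtt w)$ with $U_i(X_i')\ge U_i(X_i)$ for all $i$, with at least one strict inequality. *)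

From HB Require Import structures.
From mathcomp Require Import all_boot all_order all_algebra.
From mathcomp Require Import all_classical all_reals all_analysis.
Set Implicit Arguments. Unset Strict Implicit. Unset Printing Implicit Defensive.
Import Order.TTheory GRing.Theory Num.Theory.
Import numFieldNormedType.Exports.
Local Open Scope classical_set_scope.
Local Open Scope ring_scope.

Section Defs.
Context {d : measure_display} {Omega : measurableType d} {R : realType}.
Variable P : probability Omega R.

Definition nonatomic : Prop :=
  forall A : set Omega, measurable A -> (0 < P A)%E ->
    exists B : set Omega, [/\ measurable B, B `<=` A, (0 < P B)%E & (P B < P A)%E].

Definition in_Linfty (Y : Omega -> R) : Prop :=
  measurable_fun setT Y /\ exists M : R, {ae P, forall om, `|Y om| <= M}.

(* Choquet integral of f with respect to the distorted capacity T o P: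
   int_0^oo T(P(f > t)) dt - int_{-oo}^0 (1 - T(P(f > t))) dt *)
Definition choquet (T : R -> R) (f : Omega -> R) : R :=
  fine (\int[lebesgue_measure]_(t in `[0, +oo[%classic)
          (T (fine (P [set om | t < f om])))%:E)
  - fine (\int[lebesgue_measure]_(t in `]-oo, 0[%classic)
          (1 - T (fine (P [set om | t < f om])))%:E).

Definition expect (f : Omega -> R) : R := fine (\int[P]_om (f om)%:E).

(* agent utilities: agent 1 (index 0) is RDEU with distortion T,
   agents 2..n are expected-utility maximizers *)
Definition agent_util (n : nat) (T : R -> R) (u : 'I_n -> R -> R)
  (i : 'I_n) (Y : Omega -> R) : R :=
  if (val i == 0)%N then choquet T (u i \o Y) else expect (u i \o Y).

Definition feasible (Xs : set (Omega -> R)) (n : nat) (w : R)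
  (X : 'I_n -> Omega -> R) : Prop :=
  (forall i, Xs (X i)) /\ {ae P, forall om, \sum_(i < n) X i om = w}.

Definition pareto_optimal (Xs : set (Omega -> R)) (n : nat) (w : R)
  (T : R -> R) (u : 'I_n -> R -> R) (X : 'I_n -> Omega -> R) : Prop :=
  feasible Xs w X /\
  ~ (exists X' : 'I_n -> Omega -> R,
       [/\ feasible Xs w X',
           forall i, agent_util T u i (X i) <= agent_util T u i (X' i)
         & exists i, agent_util T u i (X i) < agent_util T u i (X' i)]).

Definition full_insurance (n : nat) (X : 'I_n -> Omega -> R) : Prop :=
  forall i, exists c : R, {ae P, forall om, X i om = c}.

End Defs.

Definition twice_diff {R : realType} (f : R -> R) : Prop :=
  forall x : R, derivable f x 1 /\ derivable (derive1 f) x 1.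

(* standing assumption on T (a T : [0,1] -> [0,1] is represented by any
   twice differentiable extension to R; only values on [0,1] matter) *)
Definition distortion_std {R : realType} (T : R -> R) : Prop :=
  [/\ twice_diff T,
      (forall x y : R, 0 <= x -> x < y -> y <= 1 -> T x < T y),
      T 0 = 0 & T 1 = 1].

Definition convex01 {R : realType} (T : R -> R) : Prop :=
  forall x y t : R, 0 <= x <= 1 -> 0 <= y <= 1 -> 0 <= t <= 1 ->
    T (t * x + (1 - t) * y) <= t * T x + (1 - t) * T y.

Definition utility_std {R : realType} (u : R -> R) : Prop :=
  [/\ twice_diff u,
      (forall x y t : R, x != y -> 0 < t < 1 ->
         t * u x + (1 - t) * u y < u (t * x + (1 - t) * y))
    & (forall x y : R, x <= y -> u x <= u y)].

(* Convexity of T together with T 0 = 0 and T 1 = 1 gives T p <= p, so comparing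
   the two layer-cake formulas, the Choquet integral of agent 1 is dominated by
   the expectation. Hence every agent satisfies U_i(Y) <= E[u_i(Y)] <= u_i(E[Y])
   by Jensen's inequality, and strict concavity of u_i makes the last inequality
   an equality only for almost surely constant Y. Replacing an allocation X by
   the constants E[X_i] is feasible and weakly improves every agent, so a Pareto
   optimal X has U_i(X_i) = u_i(E[X_i]) and is therefore a full-insurance
   allocation. Conversely, if X_i = c_i a.s. and X' weakly dominates X, then
   u_i(c_i) <= U_i(X'_i) <= u_i(E[X'_i]) forces c_i <= E[X'_i]; both families sum
   to w, so c_i = E[X'_i] and nobody is strictly better off. *)

From HB Require Import structures.
From mathcomp Require Import all_boot all_order all_algebra.
From mathcomp Require Import all_classical all_reals all_analysis.
From mathcomp Require Import measurable_realfun ring lra.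
Import Order.TTheory GRing.Theory Num.Theory.
Import numFieldNormedType.Exports.
Local Open Scope classical_set_scope.
Local Open Scope ring_scope.

Section concave_functions.
Context {R : realType}.
Implicit Types (u : R -> R) (m x y : R).

Definition concave u := forall x y (t : R), 0 <= t <= 1 ->
  t * u x + (1 - t) * u y <= u (t * x + (1 - t) * y).

Definition strictly_concave u := forall x y (t : R), x != y -> 0 < t < 1 ->
  t * u x + (1 - t) * u y < u (t * x + (1 - t) * y).

Lemma strictly_concaveW {u} : strictly_concave u -> concave u.
Proof.
move=> su x y t /andP[t0 t1].
have [->|xy] := eqVneq x y; first by rewrite -!mulrDl subrKC !mul1r.
have [->|t_neq0] := eqVneq t 0; first by rewrite !(mul0r, add0r, subr0, mul1r).
have [->|t_neq1] := eqVneq t 1; first by rewrite !(mul1r, subrr, mul0r, addr0).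
by apply/ltW/su => //; rewrite !lt_neqAle eq_sym t_neq0 t_neq1 t0 t1.
Qed.

Lemma concave_le_tangent u m y : concave u -> derivable u m 1 ->
  u y <= u m + 'D_1 u m * (y - m).
Proof.
move=> cu /derivable1_diffP du; set v := y - m.
have Dv : 'D_v u m = 'D_1 u m * v.
  by rewrite !deriveE // -[v in LHS]mulr1 -[v * 1]/(v *: 1) linearZ mulrC.
have qcvg : (fun t => t^-1 *: ((u \o shift m) (t *: v) - u m)) @ 0^'+ --> 'D_v u m.
  exact/cvg_dnbhs_at_right/(diff_derivable du).
(* For 0 < t < 1, concavity on the chord from m to y bounds the difference
   quotient below by u y - u m. *)
rewrite -Dv -lerBlDl; apply: (cvgr_to_ge qcvg).
near=> t.
have t0 : 0 < t by near: t; exact: nbhs_right_gt.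
have t1 : t < 1 by near: t; exact: nbhs_right_lt.
have := cu y m t; rewrite (ltW t0) (ltW t1) => /(_ isT) /=.
have -> : t * y + (1 - t) * m = t * v + m by rewrite /v; ring.
move=> ct; rewrite ler_pdivlMl // -[t *: v]/(t * v); lra.
Unshelve. all: by end_near.
Qed.

Let half_in01 : ((0 : R) < 1 / 2) && (1 / 2 < 1 :> R).
Proof. by apply/andP; split; lra. Qed.

Lemma strictly_concave_lt_tangent u m y : strictly_concave u -> derivable u m 1 ->
  y != m -> u y < u m + 'D_1 u m * (y - m).
Proof.
move=> su du ym.
have := concave_le_tangent u m ((y + m) / 2) (strictly_concaveW su) du.
have := su y m (1 / 2) ym half_in01.
have -> : 1 / 2 * y + (1 - 1 / 2) * m = (y + m) / 2 by field.
set D := 'D_1 u m.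
have -> : D * ((y + m) / 2 - m) = D * (y - m) / 2 by field.
lra.
Qed.

Lemma strictly_concave_nondecreasing_increasing {u} : strictly_concave u ->
  {homo u : x y / x <= y} -> {homo u : x y / x < y}.
Proof.
move=> su mu x y xy.
have := su x y (1 / 2) (negbT (lt_eqF xy)) half_in01.
have := mu (1 / 2 * x + (1 - 1 / 2) * y) y; have := mu x y (ltW xy).
have -> : 1 / 2 * x + (1 - 1 / 2) * y <= y by lra.
lra.
Qed.
End concave_functions.

Section expectation.
Context {d : measure_display} {Omega : measurableType d} {R : realType}.
Variable P : probability Omega R.
Implicit Types (f : Omega -> R) (c K : R).

Lemma ae_bounded_integrable f K : measurable_fun setT f ->
  {ae P, forall om, `|f om| <= K} -> P.-integrable setT (EFin \o f).
Proof.
move=> mf fK; apply/integrableP; split; first exact/measurable_EFinP.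
apply: (@le_lt_trans _ _ (\int[P]_om (cst `|K|%:E om))%E).
  apply: ae_ge0_le_integral => //.
  - by apply: measurableT_comp => //; exact/measurable_EFinP.
  - by move=> om _; rewrite lee_fin.
  - by apply: filterS fK => om fK _ /=; rewrite lee_fin (le_trans fK) ?ler_norm.
rewrite integral_cst // lte_mul_pinfty //.
exact: le_lt_trans (probability_le1 P measurableT) (ltry 1).
Qed.

Lemma in_Linfty_integrable f : in_Linfty P f -> P.-integrable setT (EFin \o f).
Proof. by case=> mf [K]; exact: ae_bounded_integrable. Qed.

Lemma expect_ae_cst f c : measurable_fun setT f ->
  {ae P, forall om, f om = c} -> expect P f = c.
Proof.
move=> mf fc; rewrite /expect (ae_eq_integral (cst c%:E)) //.
- by rewrite integral_cst // [X in (_ * X)%E]probability_setT mule1.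
- exact/measurable_EFinP.
- by apply: filterS fc => om /= -> _.
Qed.

Lemma integrable_funB f g : P.-integrable setT (EFin \o f) ->
  P.-integrable setT (EFin \o g) -> P.-integrable setT (EFin \o (f \- g)).
Proof.
move=> intf intg; rewrite (_ : EFin \o _ = fun om => (f om)%:E - (g om)%:E)%E.
  exact: integrableB.
by apply/funext => om; rewrite /= EFinB.
Qed.

Lemma integrable_affine a b f : P.-integrable setT (EFin \o f) ->
  P.-integrable setT (EFin \o (fun om => a + b * f om)).
Proof.
move=> intf.
rewrite (_ : EFin \o _ = (EFin \o cst a) \+ (fun om => b%:E * (f om)%:E))%E.
  apply: integrableD => //; first exact: finite_measure_integrable_cst.
  exact: integrableZl.
by apply/funext => om; rewrite /= EFinD EFinM.
Qed.

Lemma expectB f g : P.-integrable setT (EFin \o f) ->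
  P.-integrable setT (EFin \o g) -> expect P (f \- g) = expect P f - expect P g.
Proof. exact: RintegralB. Qed.

Lemma expect_affine a b f : P.-integrable setT (EFin \o f) ->
  expect P (fun om => a + b * f om) = a + b * expect P f.
Proof.
move=> intf; rewrite /expect -!/(Rintegral _ _ _) RintegralD //.
- by rewrite Rintegral_cst // [X in fine X]probability_setT mulr1 RintegralZl.
- exact: finite_measure_integrable_cst.
- by apply: (integrableZl _ b) intf.
Qed.

Lemma expect_sum n (F : 'I_n -> Omega -> R) :
  (forall i, P.-integrable setT (EFin \o F i)) ->
  expect P (fun om => \sum_(i < n) F i om) = \sum_(i < n) expect P (F i).
Proof.
move=> intF; rewrite /expect.
under eq_integral => om _ do rewrite -sumEFin.
rewrite integral_sum // -sum_fine // => i _.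
exact: integrable_fin_num (intF i).
Qed.

Lemma ge0_expect_eq0 f : P.-integrable setT (EFin \o f) ->
  (forall om, 0 <= f om) -> expect P f = 0 -> {ae P, forall om, f om = 0}.
Proof.
move=> intf f0 Ef0.
have /integrableP[mf _] := intf.
have : (\int[P]_om `|(f om)%:E| = 0)%E.
  under eq_integral => om _ do rewrite gee0_abs ?lee_fin //.
  by rewrite -[LHS]fineK ?(integrable_fin_num _ intf) // [fine _]Ef0.
move/(ae_eq_integral_abs P measurableT mf).
by apply: filterS => om /(_ I) [].
Qed.

End expectation.

Section jensen.
Context {d : measure_display} {Omega : measurableType d} {R : realType}.
Variables (P : probability Omega R) (u : R -> R) (Y : Omega -> R).
Hypotheses (intY : P.-integrable setT (EFin \o Y))
  (intuY : P.-integrable setT (EFin \o (u \o Y)))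
  (du : derivable u (expect P Y) 1).

Let m := expect P Y.
Let D := 'D_1 u m.
Let tangent om := u m - D * m + D * Y om.
Let gap := tangent \- (u \o Y).

Let gapE om : gap om = u m + D * (Y om - m) - u (Y om).
Proof. by rewrite /gap /tangent /=; congr (_ - _); ring. Qed.

Let integrable_gap : P.-integrable setT (EFin \o gap).
Proof. exact/integrable_funB/intuY/integrable_affine. Qed.

Let expect_gap : expect P gap = u m - expect P (u \o Y).
Proof.
by rewrite expectB ?expect_affine -/m ?subrK //; exact: integrable_affine.
Qed.

Lemma jensen_concave : concave u -> expect P (u \o Y) <= u (expect P Y).
Proof.
move=> cu; rewrite -subr_ge0 -/m -expect_gap.
by apply: Rintegral_ge0 => om _; rewrite gapE subr_ge0 concave_le_tangent.
Qed.

Lemma jensen_strictly_concave_eq : strictly_concave u ->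
  expect P (u \o Y) = u (expect P Y) -> {ae P, forall om, Y om = expect P Y}.
Proof.
move=> su Eeq.
have gap_ge0 om : 0 <= gap om.
  by rewrite gapE subr_ge0 concave_le_tangent //; exact: strictly_concaveW.
have : expect P gap = 0 by rewrite expect_gap Eeq subrr.
move/(ge0_expect_eq0 _ _ integrable_gap gap_ge0); apply: filterS => om.
apply: contra_eq => Ym; rewrite gapE gt_eqF // subr_gt0.
exact: strictly_concave_lt_tangent.
Qed.

End jensen.

Section choquet.
Context {d : measure_display} {Omega : measurableType d} {R : realType}.
Variable P : probability Omega R.
Implicit Types (f : Omega -> R) (c t : R).

Definition survival f t := fine (P [set om | t < f om]).

Lemma measurable_superlevel f t : measurable_fun setT f ->
  measurable [set om | t < f om].
Proof.
move=> mf; have := mf measurableT _ (measurable_itv `]t, +oo[).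
rewrite setTI; congr measurable.
by apply/seteqP; split => om /=; rewrite in_itv /= andbT.
Qed.

Section measurable_function.
Variable f : Omega -> R.
Hypothesis mf : measurable_fun setT f.

Let mf_superlevel t : measurable [set om | t < f om].
Proof. exact: measurable_superlevel. Qed.

Lemma survivalE t : (survival f t)%:E = P [set om | t < f om].
Proof. by rewrite fineK // fin_num_measure. Qed.

Lemma survival_itv01 t : 0 <= survival f t <= 1.
Proof. by rewrite -!lee_fin survivalE measure_ge0 probability_le1. Qed.

Lemma survival_nonincreasing : nonincreasing_fun (survival f).
Proof.
move=> s t st; rewrite -lee_fin !survivalE.
by apply: le_measure; rewrite ?inE // => om /=; exact: le_lt_trans.
Qed.

Let measurable_survival (D : set R) : measurable D ->
  measurable_fun D (survival f).
Proof. by move=> mD; exact: nonincreasing_measurable mD survival_nonincreasing. Qed.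

Lemma survival_ae1 t : {ae P, forall om, t < f om} -> survival f t = 1.
Proof.
case=> N [mN PN0 tfN]; apply/EFin_inj; rewrite survivalE.
rewrite -(setCK [set om | t < f om]) probability_setC; last exact: measurableC.
by rewrite (subset_measure0 _ mN tfN PN0) ?sube0 //; exact: measurableC.
Qed.

Lemma survival_ae0 t : {ae P, forall om, f om <= t} -> survival f t = 0.
Proof.
case=> N [mN PN0 ftN]; apply/EFin_inj; rewrite survivalE.
apply: (subset_measure0 _ mN _ PN0) => //.
by move=> om /= tf; apply: ftN => /=; rewrite leNgt tf.
Qed.

Lemma integral_layer_cake : P.-integrable setT (EFin \o f) ->
  (\int[P]_om (f om)%:E =
    \int[lebesgue_measure]_(t in `[0%R, +oo[) (survival f t)%:E
    - \int[lebesgue_measure]_(t in `]-oo, 0%R[) (1 - survival f t)%:E)%E.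
Proof.
move=> intf; pose X : {RV P >-> R} := mfun_Sub (mem_set mf : f \in mfun).
have LX : (X : Omega -> R) \in Lfun P 1 by exact/Lfun1_integrable.
have ccdfE t : (survival f t)%:E = ccdf X t.
  rewrite survivalE /ccdf /distribution /pushforward; congr (P _).
  by apply/seteqP; split => om /=; rewrite in_itv /= andbT.
have cdfE t : (1 - survival f t)%:E = cdf X t by rewrite cdf_1_ccdf -ccdfE.
rewrite (_ : (\int[P]_om (f om)%:E)%E = ('E_P[X])%E); last first.
  by rewrite expectation_def.
rewrite expectation_cdf_ccdf //.
by congr (_ - _)%E; apply: eq_integral => t _; rewrite ?ccdfE ?cdfE.
Qed.

Lemma layer_cake_fin_num : P.-integrable setT (EFin \o f) ->
  (\int[lebesgue_measure]_(t in `[0%R, +oo[) (survival f t)%:E)%E \is a fin_num /\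
  (\int[lebesgue_measure]_(t in `]-oo, 0%R[) (1 - survival f t)%:E)%E \is a fin_num.
Proof.
move=> intf; have := integrable_fin_num measurableT intf.
by rewrite integral_layer_cake // fin_numB => /andP.
Qed.

Lemma choquet_id : P.-integrable setT (EFin \o f) ->
  choquet P (fun p => p) f = expect P f.
Proof.
move=> intf; have [fin1 fin2] := layer_cake_fin_num intf.
by rewrite /expect integral_layer_cake // fineB.
Qed.

Section distortion.
Variable T : R -> R.
Hypotheses (T0 : T 0 = 0) (T1 : T 1 = 1).

Lemma choquet_ae_cst c : {ae P, forall om, f om = c} -> choquet P T f = c.
Proof.
move=> fc.
have TS t : T (survival f t) = survival f t.
  have [tc|ct] := ltP t c.
    by rewrite survival_ae1 // ?T1 //; apply: filterS fc => om ->.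
  by rewrite survival_ae0 // ?T0 //; apply: filterS fc => om ->.
transitivity (choquet P (fun p => p) f).
  by congr (fine _ - fine _)%R; apply: eq_integral => t _; rewrite TS.
rewrite choquet_id; first exact: expect_ae_cst.
by apply: (ae_bounded_integrable _ _ `|c|) => //; apply: filterS fc => om ->.
Qed.

Hypothesis T_nondecreasing : forall p q, 0 <= p -> p <= q -> q <= 1 -> T p <= T q.

Let TS_itv01 t : 0 <= T (survival f t) <= 1.
Proof.
have /andP[S0 S1] := survival_itv01 t.
by apply/andP; split; [rewrite -T0 | rewrite -T1]; exact: T_nondecreasing.
Qed.

Let measurable_TS (D : set R) : measurable D ->
  measurable_fun D (fun t => T (survival f t)).
Proof.
move=> mD; apply: nonincreasing_measurable => // s t st.
have /andP[? ?] := survival_itv01 s; have /andP[? ?] := survival_itv01 t.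
by apply: T_nondecreasing => //; exact: survival_nonincreasing.
Qed.

Lemma choquet_neg_part_fin_num K : {ae P, forall om, `|f om| <= K} ->
  (\int[lebesgue_measure]_(t in `]-oo, 0%R[) (1 - T (survival f t))%:E)%E
    \is a fin_num.
Proof.
(* The integrand vanishes below - |K| and is at most 1 on [- |K|, 0[. *)
move=> fK.
have S1 t : t < - `|K| -> survival f t = 1.
  move=> tK; apply: survival_ae1; apply: filterS fK => om.
  by rewrite ler_norml => /andP[Kf _]; have := ler_norm K; lra.
have gap01 t : 0 <= 1 - T (survival f t) <= 1.
  by have /andP[? ?] := TS_itv01 t; apply/andP; split; lra.
rewrite ge0_fin_numE; last first.
  by apply: integral_ge0 => t _; rewrite lee_fin; case/andP: (gap01 t).
apply: (@le_lt_trans _ _ (\int[lebesgue_measure]_(t in `]-oo, 0%R[)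
    (\1_(`[- `|K|, 0%R[%classic) t)%:E)%E).
  apply: ge0_le_integral => //.
  - by move=> t _; rewrite lee_fin; case/andP: (gap01 t).
  - by apply/measurable_EFinP/measurable_funB => //; exact: measurable_TS.
  - by apply/measurable_EFinP; exact: measurable_indic.
  move=> t; rewrite /= in_itv /= => t0.
  have [Kt|tK] := leP (- `|K|) t; last by rewrite S1 // T1 subrr lee_fin.
  rewrite indicE mem_set /=; last by rewrite in_itv /= Kt t0.
  by rewrite lee_fin; case/andP: (gap01 t).
rewrite integral_indic // (le_lt_trans (measureIl _ _ _)) //.
rewrite [X in (X < _)%E](lebesgue_measure_itv `[- `|K|, 0%R[).
by case: ifP => _; rewrite -?EFinB ltry.
Qed.

Lemma choquet_le_expect K : (forall p, 0 <= p <= 1 -> T p <= p) ->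
  {ae P, forall om, `|f om| <= K} -> choquet P T f <= expect P f.
Proof.
move=> T_le fK; have intf := ae_bounded_integrable _ _ _ mf fK.
have [fin_pos fin_neg] := layer_cake_fin_num intf.
have pos_le : (\int[lebesgue_measure]_(t in `[0%R, +oo[) (T (survival f t))%:E
    <= \int[lebesgue_measure]_(t in `[0%R, +oo[) (survival f t)%:E)%E.
  apply: ge0_le_integral => //.
  - by move=> t _; rewrite lee_fin; case/andP: (TS_itv01 t).
  - by apply/measurable_EFinP; exact: measurable_TS.
  - by apply/measurable_EFinP; exact: measurable_survival.
  - by move=> t _; rewrite lee_fin; exact/T_le/survival_itv01.
have neg_le : (\int[lebesgue_measure]_(t in `]-oo, 0%R[) (1 - survival f t)%:E
    <= \int[lebesgue_measure]_(t in `]-oo, 0%R[) (1 - T (survival f t))%:E)%E.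
  apply: ge0_le_integral => //.
  - by move=> t _; rewrite lee_fin subr_ge0; case/andP: (survival_itv01 t).
  - by apply/measurable_EFinP/measurable_funB => //; exact: measurable_survival.
  - by apply/measurable_EFinP/measurable_funB => //; exact: measurable_TS.
  - by move=> t _; rewrite lee_fin lerB //; exact/T_le/survival_itv01.
rewrite -choquet_id //; apply: lerB; apply: fine_le => //;
  last exact: choquet_neg_part_fin_num fK.
rewrite ge0_fin_numE ?(le_lt_trans pos_le) ?ltey_eq ?fin_pos //.
by apply: integral_ge0 => t _; rewrite lee_fin; case/andP: (TS_itv01 t).
Qed.

End distortion.

End measurable_function.
End choquet.

Section distortion_utility.
Context {R : realType}.
Implicit Types (T u : R -> R).

Lemma distortion_nondecreasing T : distortion_std T ->
  forall p q, 0 <= p -> p <= q -> q <= 1 -> T p <= T q.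
Proof.
case=> _ T_incr _ _ p q p0; rewrite le_eqVlt => /predU1P[-> // | pq] q1.
exact/ltW/T_incr.
Qed.

Lemma convex_distortion_le_id T : convex01 T -> T 0 = 0 -> T 1 = 1 ->
  forall p, 0 <= p <= 1 -> T p <= p.
Proof.
move=> T_convex T0 T1 p /andP[p0 p1].
have := T_convex 1 0 p; rewrite T1 T0 !mulr1 !mulr0 !addr0.
by apply; rewrite ?lexx ?ler01 ?p0 ?p1.
Qed.

Lemma utility_continuous u : utility_std u -> continuous u.
Proof.
case=> u_diff _ _ x; apply/differentiable_continuous/derivable1_diffP.
by case: (u_diff x).
Qed.

Lemma utility_in_Linfty {d} {Omega : measurableType d} {P : probability Omega R}
  {u} {Y : Omega -> R} :
  utility_std u -> in_Linfty P Y -> in_Linfty P (u \o Y).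
Proof.
move=> u_std [mY [M YM]]; have [_ _ u_mono] := u_std; split.
  have cu := utility_continuous _ u_std.
  exact: measurableT_comp (continuous_measurable_fun cu) mY.
exists (`|u (- M)| + `|u M|); apply: filterS YM => om.
rewrite ler_norml => /andP[/u_mono uMY /u_mono uYM].
have uM := ler_norm (u M); have uNM := lerNnormlW (lexx `|u (- M)|).
have uM0 := normr_ge0 (u M); have uNM0 := normr_ge0 (u (- M)).
by rewrite /= ler_norml; apply/andP; split; lra.
Qed.

End distortion_utility.

Section pareto.
Context {d : measure_display} {Omega : measurableType d} {R : realType}.
Variables (P : probability Omega R) (Xs : set (Omega -> R)) (n : nat) (w : R)
  (T : R -> R) (u : 'I_n -> R -> R).
Hypotheses (Xs_Linfty : forall Y, Xs Y -> in_Linfty P Y)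
  (Xs_cst : forall c : R, Xs (fun _ => c))
  (T_std : distortion_std T) (T_convex : convex01 T)
  (u_std : forall i, utility_std (u i)).

Let T0 : T 0 = 0. Proof. by case: T_std. Qed.
Let T1 : T 1 = 1. Proof. by case: T_std. Qed.

Lemma agent_util_ae_cst i (Y : Omega -> R) c : measurable_fun setT Y ->
  {ae P, forall om, Y om = c} -> agent_util P T u i Y = u i c.
Proof.
move=> mY Yc.
have [muY _] : in_Linfty P (u i \o Y).
  apply: utility_in_Linfty => //; split => //.
  by exists `|c|; apply: filterS Yc => om ->.
have uYc : {ae P, forall om, (u i \o Y) om = u i c} by apply: filterS Yc => om /= ->.
rewrite /agent_util; case: ifP => _; first exact: choquet_ae_cst.
exact: expect_ae_cst.
Qed.

Lemma agent_util_le_expect i Y : in_Linfty P Y ->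
  agent_util P T u i Y <= expect P (u i \o Y).
Proof.
move=> /(utility_in_Linfty (u_std i)) [muY [K uYK]].
rewrite /agent_util; case: ifP => // _.
apply: choquet_le_expect uYK => //; first exact: distortion_nondecreasing.
exact: convex_distortion_le_id.
Qed.

Let jensen_conditions i Y : in_Linfty P Y ->
  [/\ P.-integrable setT (EFin \o Y), P.-integrable setT (EFin \o (u i \o Y))
    & derivable (u i) (expect P Y) 1].
Proof.
move=> YL; split; [exact: in_Linfty_integrable | |].
  exact/in_Linfty_integrable/utility_in_Linfty.
by case: (u_std i) => /(_ (expect P Y)) [].
Qed.

Lemma agent_util_le_util_expect i Y : in_Linfty P Y ->
  agent_util P T u i Y <= u i (expect P Y).
Proof.
move=> YL; have [intY intuY du] := jensen_conditions i Y YL.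
apply: le_trans (agent_util_le_expect i Y YL) _.
by apply: jensen_concave => //; apply: strictly_concaveW; case: (u_std i).
Qed.

Lemma agent_util_ge_util_expect i Y : in_Linfty P Y ->
  u i (expect P Y) <= agent_util P T u i Y -> {ae P, forall om, Y om = expect P Y}.
Proof.
move=> YL ge_util; have [intY intuY du] := jensen_conditions i Y YL.
have su : strictly_concave (u i) by case: (u_std i).
have cu := strictly_concaveW su.
apply: jensen_strictly_concave_eq su _ => //; apply/eqP.
rewrite eq_le jensen_concave //=.
exact: le_trans ge_util (agent_util_le_expect i Y YL).
Qed.

Lemma feasible_sum_expect X : feasible P Xs w X -> \sum_(i < n) expect P (X i) = w.
Proof.
case=> XsX sumX; have intX i := in_Linfty_integrable _ _ (Xs_Linfty _ (XsX i)).
rewrite -expect_sum //; apply: expect_ae_cst sumX.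
by apply: measurable_sum => i; case: (Xs_Linfty _ (XsX i)).
Qed.

Lemma pareto_optimal_full_insurance X :
  pareto_optimal P Xs w T u X -> full_insurance P X.
Proof.
case=> feasX not_dominated i; have [XsX _] := feasX.
pose Xc j := fun _ : Omega => expect P (X j).
have util_Xc j : agent_util P T u j (Xc j) = u j (expect P (X j)).
  by apply: agent_util_ae_cst; [exact: measurable_cst | exact: aeW].
have feasXc : feasible P Xs w Xc.
  by split=> [j|]; [exact: Xs_cst | apply: aeW => om; exact: feasible_sum_expect].
have no_gain j : agent_util P T u j (Xc j) <= agent_util P T u j (X j).
  rewrite leNgt; apply/negP => gain; apply: not_dominated; exists Xc.
  split=> // [k|]; last by exists j.
  by rewrite util_Xc; exact/agent_util_le_util_expect/Xs_Linfty.
exists (expect P (X i)).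
apply: (agent_util_ge_util_expect i); first exact: Xs_Linfty.
by rewrite -util_Xc; exact: no_gain.
Qed.

Lemma full_insurance_pareto_optimal X : feasible P Xs w X ->
  full_insurance P X -> pareto_optimal P Xs w T u X.
Proof.
move=> feasX /choice[c Xc]; split=> // -[X' [feasX' dominates [i gain]]].
have XL j := Xs_Linfty _ (feasX.1 j); have X'L j := Xs_Linfty _ (feasX'.1 j).
have util_X j : agent_util P T u j (X j) = u j (c j).
  by apply: agent_util_ae_cst (Xc j); case: (XL j).
have c_le j : c j <= expect P (X' j).
  rewrite leNgt; apply/negP => lt_c; have [_ su u_mono] := u_std j.
  have := strictly_concave_nondecreasing_increasing su u_mono _ _ lt_c.
  by rewrite ltNge -util_X (le_trans (dominates j)) ?agent_util_le_util_expect.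
have sum_c : \sum_(j < n) c j = w.
  rewrite -(feasible_sum_expect _ feasX); apply: eq_bigr => j _.
  by rewrite (expect_ae_cst _ _ _ _ (Xc j)) //; case: (XL j).
have c_eq j : c j = expect P (X' j).
  apply/eqP; rewrite eq_sym -subr_eq0; apply/eqP.
  apply: (@psumr_eq0P _ _ predT (fun j => expect P (X' j) - c j)) => // [k _|].
    by rewrite subr_ge0.
  by rewrite sumrB sum_c feasible_sum_expect // subrr.
have := agent_util_le_util_expect i _ (X'L i).
by rewrite -c_eq -util_X => /(lt_le_trans gain); rewrite ltxx.
Qed.

End pareto.

Theorem corollary3p8 (d : measure_display) (Omega : measurableType d)
  (R : realType) (P : probability Omega R) (Xs : set (Omega -> R))
  (n : nat) (w : R) (T : R -> R) (u : 'I_n -> R -> R) :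
  nonatomic P ->
  (forall Y, Xs Y -> in_Linfty P Y) ->
  (forall c : R, Xs (fun _ => c)) ->
  (2 <= n)%N ->
  distortion_std T ->
  (forall i, utility_std (u i)) ->
  convex01 T ->
  forall X : 'I_n -> Omega -> R, feasible P Xs w X ->
    (pareto_optimal P Xs w T u X <-> full_insurance P X).
Proof.
move=> _ Xs_Linfty Xs_cst _ T_std u_std T_convex X feasX; split.
- by apply: pareto_optimal_full_insurance.
- by apply: full_insurance_pareto_optimal.
Qed.
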